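(* Let $\mathcal{C}'$ be any function mapping a pair consisting of an $\mathcal{ALC}$-formula and an interpretation to an $\mathcal{ALC}$-formula. Then $\mathcal{C}'(\varphi,M)\equiv \mathcal{C}(\varphi,M)$ for every $\mathcal{ALC}$-formula $\varphi$ and every interpretation $M$ (where $\mathcal{C}$ is the finite base model contraction function defined in the context) if and only if $\mathcal{C}'$ satisfies, for every $\mathcal{ALC}$-formula $\varphi$ and every interpretation $M$, the following postulates: (success) $M\not\models \mathcal{C}'(\varphi,M)$; (inclusion) $\mathrm{Mod}(\mathcal{C}'(\varphi,M))\subseteq \mathrm{Mod}(\varphi)$; (atomic retainment) for every set $\mathbb{M}'$ of interpretations, if $\mathrm{Mod}(\mathcal{C}'(\varphi,M))\subsetneq \mathbb{M}'\subseteq \mathrm{Mod}(\varphi)\setminus [M]_\varphi$, then $\mathbb{M}'$ is not finitely representable in $\mathcal{ALC}$-formula; (atomic extensionality) for every interpretation $M'$, if $M'\equiv_\varphi M$ then $\mathrm{Mod}(\mathcal{C}'(\varphi,M))=\mathrm{Mod}(\mathcal{C}'(\varphi,M'))$.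
   Context: Syntax: $N_C,N_R,N_I$ are pairwise disjoint countably infinite sets of concept, role and individual names. $\mathcal{ALC}$ concepts: $C::=A\mid \neg C\mid (C\sqcap C)\mid \exists r.C$ ($A\in N_C$, $r\in N_R$); $\top$, $\sqcup$ are the usual abbreviations. $\mathcal{ALC}$-formulae: $\phi::=\alpha\mid\neg\phi\mid(\phi\wedge\phi)$, with atomic formulae $\alpha::=C(a)\mid r(a,b)\mid (C=\top)$, $a,b\in N_I$; $\vee$ and $\bot$ are the usual abbreviations and $\neg\neg\psi$ is identified with $\psi$. A literal is an atomic formula or the negation of one. Semantics: an interpretation $I=(\Delta^I,\cdot^I)$ has a countable nonempty domain and maps concept names to subsets, role names to binary relations and individual names to elements; concepts are interpreted as usual ($\top^I=\Delta^I$, $(\neg C)^I=\Delta^I\setminus C^I$, $(C\sqcap D)^I=C^I\cap D^I$, $(\exists r.C)^I=\{d\mid \exists d'\in C^I,(d,d')\in r^I\}$); $I\models C(a)$ iff $a^I\in C^I$, $I\models r(a,b)$ iff $(a^I,b^I)\in r^I$, $I\models (C=\top)$ iff $C^I=\Delta^I$, with $\neg,\wedge$ classical. Models are interpretations; $\mathrm{Mod}(\varphi)$ is the set of interpretations satisfying $\varphi$; $\varphi\equiv\psi$ iff $\mathrm{Mod}(\varphi)=\mathrm{Mod}(\psi)$. A set of interpretations is finitely representable in $\mathcal{ALC}$-formula if it equals $\mathrm{Mod}$ of some finite set of $\mathcal{ALC}$-formulae (equivalently of a single $\mathcal{ALC}$-formula). Subformulae: $\mathrm{Sub}(\alpha)=\mathrm{Sub}(\neg\alpha)=\{\alpha,\neg\alpha\}$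 for atomic $\alpha$; $\mathrm{Sub}(\psi\wedge\psi')=\mathrm{Sub}(\neg(\psi\wedge\psi'))=\{\psi\wedge\psi',\neg(\psi\wedge\psi')\}\cup\mathrm{Sub}(\psi)\cup\mathrm{Sub}(\psi')$. $\mathrm{con}(\varphi)$ is the smallest set of concepts containing $C$ whenever $(C=\top)\in\mathrm{Sub}(\varphi)$ or $C(a)\in\mathrm{Sub}(\varphi)$, containing $C,D$ whenever it contains $C\sqcap D$, containing $C$ whenever it contains $\exists r.C$, and closed under single negation. $\mathrm{ind}(\varphi)$ is the set of individual names in $\varphi$. A concept type for $\varphi$ is $c\subseteq\mathrm{con}(\varphi)$ with: $D\in c$ iff $\neg D\notin c$ for all $D\in\mathrm{con}(\varphi)$, and $D\sqcap E\in c$ iff $\{D,E\}\subseteq c$ for all $D\sqcap E\in\mathrm{con}(\varphi)$. A formula type for $\varphi$ is $f\subseteq\mathrm{Sub}(\varphi)$ with: $\psi\in f$ iff $\neg\psi\notin f$ for all $\psi\in\mathrm{Sub}(\varphi)$, and $\psi\wedge\psi'\in f$ iff $\{\psi,\psi'\}\subseteq f$ for all $\psi\wedge\psi'\in\mathrm{Sub}(\varphi)$. A model candidate for $\varphi$ is $(T,o,f)$ with $T$ a set of concept types, $o:\mathrm{ind}(\varphi)\to T$, $f$ a formula type, such that $\varphi\in f$; $C(a)\in f$ implies $C\in o(a)$; $r(a,b)\in f$ implies $\{\neg C\mid\neg\exists r.C\in o(a)\}\subseteq o(b)$. It is a quasimodel for $\varphi$ if moreover: for every $c\in T$ and $\exists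 r.D\in c$ there is $c'\in T$ with $\{D\}\cup\{\neg E\mid \neg\exists r.E\in c\}\subseteq c'$; for every $c\in T$ and concept $C$, $\neg C\in c$ implies $(C=\top)\notin f$; for every concept $C$, $\neg(C=\top)\in f$ implies some $c\in T$ has $C\notin c$; $T\neq\emptyset$. $\mathrm{ftypes}(\varphi)=\{f\mid (T,o,f)$ a quasimodel for $\varphi\}$. For an interpretation $I$, $\mathrm{qm}(\varphi,I)=(T,o,f)$ where $T=\{c(x)\mid x\in\Delta^I\}$ with $c(x)=\{C\in\mathrm{con}(\varphi)\mid x\in C^I\}$, $o(a)=c(a^I)$, $f=\{\psi\in\mathrm{Sub}(\varphi)\mid I\models\psi\}$. $\mathrm{lit}(f)$ is the set of literals in $f$. $\mathrm{qfilter}(\varphi,M)=\mathrm{ftypes}(\varphi)\setminus\{f\}$ where $\mathrm{qm}(\varphi,M)=(T,o,f)$. The finite base model contraction function is $\mathcal{C}(\varphi,M)=\bigvee_{f\in\mathrm{qfilter}(\varphi,M)}\bigwedge\mathrm{lit}(f)$ if $M\models\varphi$ and $\mathrm{qfilter}(\varphi,M)\neq\emptyset$; $\bot$ if $M\models\varphi$ and $\mathrm{qfilter}(\varphi,M)=\emptyset$; $\varphi$ otherwise. $\mathcal{L}_{lit}(\varphi)$ is the set of Boolean combinations of the atomic formulae occurring in $\varphi$; $M\equiv_\varphi M'$ iff for all $\psi\in\mathcal{L}_{lit}(\varphi)$, $M\models\psi$ iff $M'\models\psi$; $[M]_\varphi=\{M'\mid M'\equiv_\varphi M\}$. *)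

From Stdlib Require Import List ClassicalEpsilon.
Import ListNotations.

(* Concept, role and individual names: N_C = N_R = N_I = nat (disjoint by typing). *)
Inductive concept : Type :=
| CName : nat -> concept
| CNot  : concept -> concept
| CAnd  : concept -> concept -> concept
| CEx   : nat -> concept -> concept.

Inductive formula : Type :=
| FConc : concept -> nat -> formula
| FRole : nat -> nat -> nat -> formula
| FTop  : concept -> formula
| FNot  : formula -> formula
| FAnd  : formula -> formula -> formula.

Definition is_atomic (phi : formula) : Prop :=
  match phi with FConc _ _ | FRole _ _ _ | FTop _ => True | _ => False end.

Definition is_literal (phi : formula) : bool :=
  match phi with
  | FConc _ _ | FRole _ _ _ | FTop _ => true
  | FNot (FConc _ _) | FNot (FRole _ _ _) | FNot (FTop _) => true
  | _ => false
  end.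

Definition FBot : formula := FAnd (FTop (CName 0)) (FNot (FTop (CName 0))).
Definition FTrue : formula := FNot FBot.
Definition FOr (p q : formula) : formula := FNot (FAnd (FNot p) (FNot q)).
Definition bigAnd (l : list formula) : formula := fold_right FAnd FTrue l.
Definition bigOr (l : list formula) : formula := fold_right FOr FBot l.

(* single negation ("not not psi is identified with psi") *)
Definition fneg (phi : formula) : formula :=
  match phi with FNot psi => psi | _ => FNot phi end.
Definition cneg (C : concept) : concept :=
  match C with CNot D => D | _ => CNot C end.

Fixpoint dn (phi : formula) : formula :=
  match phi with
  | FNot psi => fneg (dn psi)
  | FAnd p q => FAnd (dn p) (dn q)
  | a => a
  end.

Record Interp : Type := {
  dom : Type;
  dom_inh : inhabited dom;
  dom_count : exists g : dom -> nat, forall x y, g x = g y -> x = y;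
  cI : nat -> dom -> Prop;
  rI : nat -> dom -> dom -> Prop;
  iI : nat -> dom
}.

Fixpoint cint (I : Interp) (C : concept) : dom I -> Prop :=
  match C with
  | CName A => cI I A
  | CNot D => fun x => ~ cint I D x
  | CAnd D E => fun x => cint I D x /\ cint I E x
  | CEx r D => fun x => exists y, rI I r x y /\ cint I D y
  end.

Fixpoint sat (I : Interp) (phi : formula) : Prop :=
  match phi with
  | FConc C a => cint I C (iI I a)
  | FRole r a b => rI I r (iI I a) (iI I b)
  | FTop C => forall x, cint I C x
  | FNot psi => ~ sat I psi
  | FAnd p q => sat I p /\ sat I q
  end.

Definition Mod (phi : formula) : Interp -> Prop := fun I => sat I phi.

Definition fequiv (phi psi : formula) : Prop := forall I, sat I phi <-> sat I psi.

Definition fin_representable (S : Interp -> Prop) : Prop :=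
  exists phi : formula, forall I, S I <-> sat I phi.

Fixpoint Sub0 (phi : formula) : list formula :=
  match phi with
  | FNot psi => Sub0 psi
  | FAnd p q => FAnd p q :: FNot (FAnd p q) :: Sub0 p ++ Sub0 q
  | a => [a; FNot a]
  end.
Definition Sub (phi : formula) : list formula := Sub0 (dn phi).

Inductive con (phi : formula) : concept -> Prop :=
| con_top : forall C, In (FTop C) (Sub phi) -> con phi C
| con_conc : forall C a, In (FConc C a) (Sub phi) -> con phi C
| con_andl : forall C D, con phi (CAnd C D) -> con phi C
| con_andr : forall C D, con phi (CAnd C D) -> con phi D
| con_ex : forall r C, con phi (CEx r C) -> con phi C
| con_neg : forall C, con phi C -> con phi (cneg C).

Fixpoint ind (phi : formula) : list nat :=
  match phi with
  | FConc _ a => [a]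
  | FRole _ a b => [a; b]
  | FTop _ => []
  | FNot p => ind p
  | FAnd p q => ind p ++ ind q
  end.

Definition concept_type (phi : formula) (c : concept -> Prop) : Prop :=
  (forall D, c D -> con phi D) /\
  (forall D, con phi D -> (c D <-> ~ c (cneg D))) /\
  (forall D E, con phi (CAnd D E) -> (c (CAnd D E) <-> c D /\ c E)).

Definition formula_type (phi : formula) (f : formula -> Prop) : Prop :=
  (forall psi, f psi -> In psi (Sub phi)) /\
  (forall psi, In psi (Sub phi) -> (f psi <-> ~ f (fneg psi))) /\
  (forall p q, In (FAnd p q) (Sub phi) -> (f (FAnd p q) <-> f p /\ f q)).

Definition model_candidate (phi : formula) (T : (concept -> Prop) -> Prop)
    (o : nat -> concept -> Prop) (f : formula -> Prop) : Prop :=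
  (forall c, T c -> concept_type phi c) /\
  (forall a, In a (ind phi) -> T (o a)) /\
  formula_type phi f /\
  f (dn phi) /\
  (forall C a, f (FConc C a) -> o a C) /\
  (forall r a b, f (FRole r a b) ->
     forall C, o a (CNot (CEx r C)) -> o b (cneg C)).

Definition quasimodel (phi : formula) (T : (concept -> Prop) -> Prop)
    (o : nat -> concept -> Prop) (f : formula -> Prop) : Prop :=
  model_candidate phi T o f /\
  (forall c r D, T c -> c (CEx r D) ->
     exists c', T c' /\ c' D /\ (forall E, c (CNot (CEx r E)) -> c' (cneg E))) /\
  (forall c C, T c -> c (cneg C) -> ~ f (FTop C)) /\
  (forall C, f (FNot (FTop C)) -> exists c, T c /\ ~ c C) /\
  (exists c, T c).

Definition ftypes (phi : formula) (f : formula -> Prop) : Prop :=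
  exists T o, quasimodel phi T o f.

Definition qm_T (phi : formula) (I : Interp) : (concept -> Prop) -> Prop :=
  fun c => exists x : dom I, forall C, c C <-> (con phi C /\ cint I C x).
Definition qm_o (phi : formula) (I : Interp) : nat -> concept -> Prop :=
  fun a C => con phi C /\ cint I C (iI I a).
Definition qm_f (phi : formula) (I : Interp) : formula -> Prop :=
  fun psi => In psi (Sub phi) /\ sat I psi.

Fixpoint sublists {A : Type} (l : list A) : list (list A) :=
  match l with
  | [] => [[]]
  | x :: l' => let r := sublists l' in map (cons x) r ++ r
  end.

Definition decide (P : Prop) : bool :=
  if excluded_middle_informative P then true else false.

(* f in qfilter(phi, M); a formula type is represented by a list s of
   subformulae (as the set {psi | In psi s}); every subset of Sub(phi)
   arises from some sublist of Sub(phi). *)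
Definition in_qfilter (phi : formula) (M : Interp) (f : formula -> Prop) : Prop :=
  ftypes phi f /\ ~ (forall psi, f psi <-> qm_f phi M psi).

Definition qfilter_list (phi : formula) (M : Interp) : list (list formula) :=
  filter (fun s => decide (in_qfilter phi M (fun psi => In psi s)))
         (sublists (Sub phi)).

Definition lit_conj (s : list formula) : formula := bigAnd (filter is_literal s).

(* C(phi, M); the empty disjunction is bottom *)
Definition Ccontr (phi : formula) (M : Interp) : formula :=
  if decide (sat M phi)
  then bigOr (map lit_conj (qfilter_list phi M))
  else phi.

Fixpoint atoms (phi : formula) : list formula :=
  match phi with
  | FNot p => atoms p
  | FAnd p q => atoms p ++ atoms q
  | a => [a]
  end.

Inductive Llit (phi : formula) : formula -> Prop :=
| Llit_atom : forall a, In a (atoms phi) -> Llit phi a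
| Llit_not : forall p, Llit phi p -> Llit phi (FNot p)
| Llit_and : forall p q, Llit phi p -> Llit phi q -> Llit phi (FAnd p q).

Definition equiv_phi (phi : formula) (M M' : Interp) : Prop :=
  forall psi, Llit phi psi -> (sat M psi <-> sat M' psi).

Definition P_success (C' : formula -> Interp -> formula) phi M : Prop :=
  ~ sat M (C' phi M).

Definition P_inclusion (C' : formula -> Interp -> formula) phi M : Prop :=
  forall I, Mod (C' phi M) I -> Mod phi I.

Definition P_atomic_retainment (C' : formula -> Interp -> formula) phi M : Prop :=
  forall MM : Interp -> Prop,
    ((forall I, Mod (C' phi M) I -> MM I) /\
     ~ (forall I, Mod (C' phi M) I <-> MM I)) ->
    (forall I, MM I -> Mod phi I /\ ~ equiv_phi phi I M) ->
    ~ fin_representable MM.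

Definition P_atomic_extensionality (C' : formula -> Interp -> formula) phi M : Prop :=
  forall M', equiv_phi phi M' M ->
    forall I, Mod (C' phi M) I <-> Mod (C' phi M') I.

(* When M ⊨ φ, the models of C(φ, M) are exactly Mod(φ) \ [M]_φ (and Mod(φ) otherwise).
   A formula type is determined by its literals, so a disjunct lit(f) holds in I exactly
   when f is the formula type of I, and I ≡_φ M exactly when I and M have the same
   formula type; conversely every model I of φ yields the quasimodel qm(φ, I), so the
   disjuncts cover all models of φ outside [M]_φ.  The postulates pin down the same set:
   inclusion, success and extensionality give ⊆, and atomic retainment, applied to the
   finitely representable set Mod(C(φ, M)), excludes a strict inclusion. *)

From Stdlib Require Import List Classical ClassicalEpsilon FunctionalExtensionality
  PropExtensionality.
Import ListNotations.

Lemma decide_spec (P : Prop) : decide P = true <-> P.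
Proof.
  unfold decide; destruct (excluded_middle_informative P); split; intros; easy.
Qed.

Lemma sat_fneg I p : sat I (fneg p) <-> ~ sat I p.
Proof. destruct p; simpl; tauto. Qed.

Lemma sat_dn I p : sat I (dn p) <-> sat I p.
Proof. induction p; simpl; try tauto. rewrite sat_fneg. tauto. Qed.

Lemma cint_cneg I C x : cint I (cneg C) x <-> ~ cint I C x.
Proof. destruct C; simpl; tauto. Qed.

Lemma sat_bigAnd I l : sat I (bigAnd l) <-> (forall p, In p l -> sat I p).
Proof.
  induction l as [|a l IHl]; simpl.
  - split; [tauto|]. intros _ [H1 H2]. exact (H2 H1).
  - rewrite IHl. split; [intros [Ha Hl] p [<-|Hp]; auto | intros H; split; auto].
Qed.

Lemma sat_bigOr I l : sat I (bigOr l) <-> exists p, In p l /\ sat I p.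
Proof.
  induction l as [|a l IHl]; simpl.
  - split; [tauto|]. intros [p [[] _]].
  - rewrite IHl. split.
    + intros H. destruct (classic (sat I a)) as [Ha|Ha]; [exists a; auto|].
      destruct (classic (exists p, In p l /\ sat I p)) as [[p [Hp Hs]]|Hn];
        [exists p; auto | tauto].
    + intros [p [[<-|Hp] Hs]] [H1 H2]; [tauto|]. apply H2; eauto.
Qed.

Lemma sat_eq_on_atoms I J psi :
  (forall a, In a (atoms psi) -> (sat I a <-> sat J a)) -> (sat I psi <-> sat J psi).
Proof.
  induction psi; intros H; try (apply H; simpl; auto; fail); simpl.
  - rewrite IHpsi; [tauto | auto].
  - rewrite IHpsi1, IHpsi2; [tauto| |]; intros a Ha; apply H; simpl;
      apply in_or_app; auto.
Qed.

Fixpoint dn_free (p : formula) : Prop :=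
  match p with
  | FNot (FNot _) => False
  | FNot q => dn_free q
  | FAnd p q => dn_free p /\ dn_free q
  | _ => True
  end.

Lemma dn_free_FNot p : dn_free (FNot p) -> dn_free p.
Proof. destruct p; simpl; tauto. Qed.

Lemma dn_free_dn p : dn_free (dn p).
Proof.
  induction p; simpl; auto.
  destruct (dn p); simpl in *; auto. apply dn_free_FNot; auto.
Qed.

Lemma In_Sub0_self p : dn_free p -> In p (Sub0 p).
Proof. destruct p as [| | |p|]; simpl; auto. destruct p; simpl; auto; tauto. Qed.

Lemma Sub0_fneg x psi : In psi (Sub0 x) -> In (fneg psi) (Sub0 x).
Proof.
  induction x; simpl; intros H;
    try (destruct H as [<-|[<-|[]]]; simpl; auto; fail); auto.
  destruct H as [<-|[<-|H]]; simpl; auto. right; right.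
  apply in_app_or in H; apply in_or_app; destruct H; auto.
Qed.

Lemma Sub0_FAnd x p q :
  dn_free x -> In (FAnd p q) (Sub0 x) -> In p (Sub0 x) /\ In q (Sub0 x).
Proof.
  induction x; simpl; intros Hx H; try (destruct H as [E|[E|[]]]; discriminate).
  - apply IHx; [apply dn_free_FNot|]; auto.
  - destruct Hx as [Hx1 Hx2]. destruct H as [E|[E|H]]; [|discriminate|].
    + injection E as -> ->. split; right; right; apply in_or_app;
        [left|right]; apply In_Sub0_self; auto.
    + apply in_app_or in H as [H|H]; [destruct (IHx1 Hx1 H) | destruct (IHx2 Hx2 H)];
        split; right; right; apply in_or_app; auto.
Qed.

Lemma atoms_incl_Sub0 x : incl (atoms x) (Sub0 x).
Proof.
  induction x as [| | |x IHx|x1 IHx1 x2 IHx2]; simpl; intros a H;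
    try (destruct H as [<-|[]]; left; reflexivity).
  - apply IHx, H.
  - right; right. apply in_app_or in H; apply in_or_app; destruct H; auto.
Qed.

Lemma Sub0_incl_atoms x psi : In psi (Sub0 x) -> incl (atoms psi) (atoms x).
Proof.
  induction x; simpl; intros H;
    try (destruct H as [<-|[<-|[]]]; simpl; apply incl_refl); auto.
  destruct H as [<-|[<-|H]]; simpl; try apply incl_refl.
  apply in_app_or in H as [H|H]; [apply incl_appl|apply incl_appr]; auto.
Qed.

Lemma atoms_fneg p : atoms (fneg p) = atoms p.
Proof. destruct p; reflexivity. Qed.

Lemma atoms_dn p : atoms (dn p) = atoms p.
Proof. induction p; simpl; try rewrite atoms_fneg; congruence. Qed.

Lemma is_atomic_atoms x a : In a (atoms x) -> is_atomic a.
Proof.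
  induction x; simpl; intros H; try (destruct H as [<-|[]]; simpl; auto); auto.
  apply in_app_or in H as [H|H]; auto.
Qed.

Lemma Sub_fneg phi psi : In psi (Sub phi) -> In (fneg psi) (Sub phi).
Proof. apply Sub0_fneg. Qed.

Lemma Sub_FAnd phi p q : In (FAnd p q) (Sub phi) -> In p (Sub phi) /\ In q (Sub phi).
Proof. apply Sub0_FAnd, dn_free_dn. Qed.

Lemma Sub_dn phi : In (dn phi) (Sub phi).
Proof. apply In_Sub0_self, dn_free_dn. Qed.

Lemma atoms_incl_Sub phi : incl (atoms phi) (Sub phi).
Proof. rewrite <- atoms_dn. apply atoms_incl_Sub0. Qed.

Lemma Sub_incl_atoms phi psi : In psi (Sub phi) -> incl (atoms psi) (atoms phi).
Proof. rewrite <- (atoms_dn phi). apply Sub0_incl_atoms. Qed.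

Lemma Llit_incl_atoms phi psi : Llit phi psi <-> incl (atoms psi) (atoms phi).
Proof.
  split.
  - induction 1 as [a Ha| |]; simpl; [|auto|apply incl_app; auto].
    destruct a; simpl in *; try contradiction (is_atomic_atoms _ _ Ha);
      intros b [<-|[]]; auto.
  - induction psi; intros H; try (apply Llit_atom, H; simpl; auto; fail).
    + apply Llit_not; auto.
    + apply Llit_and; [apply IHpsi1|apply IHpsi2]; intros a Ha; apply H; simpl;
        apply in_or_app; auto.
Qed.

Lemma equiv_phi_refl phi M : equiv_phi phi M M.
Proof. intros psi _; tauto. Qed.

Lemma equiv_phi_trans phi I J K :
  equiv_phi phi I J -> equiv_phi phi J K -> equiv_phi phi I K.
Proof. intros HIJ HJK psi Hp. rewrite (HIJ psi Hp). auto. Qed.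

Lemma equiv_phi_sym phi I J : equiv_phi phi I J -> equiv_phi phi J I.
Proof. intros H psi Hp. symmetry. auto. Qed.

Lemma equiv_phi_sat phi I M : equiv_phi phi I M -> (sat I phi <-> sat M phi).
Proof. intros H. apply H, Llit_incl_atoms, incl_refl. Qed.

Lemma equiv_phi_qm_f phi I J :
  equiv_phi phi I J <-> (forall psi, qm_f phi I psi <-> qm_f phi J psi).
Proof.
  unfold qm_f. split.
  - intros H psi. specialize (H psi). rewrite Llit_incl_atoms in H.
    pose proof (Sub_incl_atoms phi psi). tauto.
  - intros H psi Hpsi. apply sat_eq_on_atoms. intros a Ha.
    apply Llit_incl_atoms in Hpsi. pose proof (atoms_incl_Sub phi a (Hpsi a Ha)).
    specialize (H a). tauto.
Qed.

Lemma formula_type_sat phi f I : formula_type phi f ->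
  (forall a, In a (atoms phi) -> (f a <-> sat I a)) ->
  forall psi, In psi (Sub phi) -> (f psi <-> sat I psi).
Proof.
  intros [_ [Hneg Hand]] Hatoms psi. induction psi; intros Hin;
    try (apply Hatoms, (Sub_incl_atoms _ _ Hin); left; reflexivity).
  - rewrite (Hneg _ Hin), IHpsi; [simpl; tauto | apply (Sub_fneg _ _ Hin)].
  - destruct (Sub_FAnd _ _ _ Hin).
    rewrite (Hand _ _ Hin), IHpsi1, IHpsi2; simpl; tauto.
Qed.

(* A formula type is determined by its literals. *)
Lemma sat_lit_conj_formula_type phi s I :
  formula_type phi (fun psi => In psi s) -> sat I (lit_conj s) ->
  forall psi, In psi s <-> qm_f phi I psi.
Proof.
  intros Hs HI. unfold lit_conj in HI. rewrite sat_bigAnd in HI.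
  assert (Hagree : forall psi, In psi (Sub phi) -> (In psi s <-> sat I psi)).
  { apply (formula_type_sat _ _ _ Hs). intros a Ha.
    assert (Hlit : forall b, In b s -> is_literal b = true -> sat I b)
      by (intros; apply HI, filter_In; auto).
    destruct Hs as [_ [Hneg _]]. specialize (Hneg _ (atoms_incl_Sub phi a Ha)).
    destruct a; try contradiction (is_atomic_atoms _ _ Ha); simpl in Hneg;
      (split; [intros Hin; apply Hlit; auto |]);
      intros Hsat; rewrite Hneg; intros Hn;
      exact (Hlit _ Hn eq_refl Hsat). }
  intros psi. unfold qm_f. destruct Hs as [Hsub _].
  pose proof (Hsub psi). pose proof (Hagree psi). tauto.
Qed.

Definition qm_list (phi : formula) (I : Interp) : list formula :=
  filter (fun psi => decide (sat I psi)) (Sub phi).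

Lemma In_qm_list phi I psi : In psi (qm_list phi I) <-> qm_f phi I psi.
Proof. unfold qm_list, qm_f. rewrite filter_In, decide_spec. reflexivity. Qed.

Lemma sat_lit_conj_qm_list phi I : sat I (lit_conj (qm_list phi I)).
Proof.
  apply sat_bigAnd. intros psi Hpsi.
  apply filter_In in Hpsi as [Hpsi _]. apply In_qm_list in Hpsi as [_ Hpsi]. exact Hpsi.
Qed.

Lemma qm_list_sublist phi I : In (qm_list phi I) (sublists (Sub phi)).
Proof.
  unfold qm_list. induction (Sub phi) as [|a l IHl]; simpl; auto.
  destruct (decide (sat I a)); apply in_or_app; [left; apply in_map|right]; auto.
Qed.

Lemma qm_T_concept_type phi I c : qm_T phi I c -> concept_type phi c.
Proof.
  intros [x Hx]. split; [|split].
  - intros D HD. apply Hx in HD. tauto.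
  - intros D HD. rewrite (Hx D), (Hx (cneg D)), cint_cneg.
    pose proof (con_neg _ _ HD). tauto.
  - intros D E HDE. rewrite !Hx. simpl.
    pose proof (con_andl _ _ _ HDE). pose proof (con_andr _ _ _ HDE). tauto.
Qed.

Lemma qm_f_formula_type phi I : formula_type phi (qm_f phi I).
Proof.
  unfold qm_f. split; [|split].
  - intros psi [Hpsi _]. exact Hpsi.
  - intros psi Hpsi. rewrite sat_fneg. pose proof (Sub_fneg _ _ Hpsi). tauto.
  - intros p q Hpq. destruct (Sub_FAnd _ _ _ Hpq). simpl. tauto.
Qed.

Lemma qm_T_elem phi I x : qm_T phi I (fun C => con phi C /\ cint I C x).
Proof. exists x. tauto. Qed.

Lemma qm_quasimodel phi I : sat I phi ->
  quasimodel phi (qm_T phi I) (qm_o phi I) (qm_f phi I).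
Proof.
  intros Hphi.
  split; [split; [|split; [|split; [|split; [|split]]]] | split; [|split; [|split]]].
  - apply qm_T_concept_type.
  - intros a _. apply qm_T_elem.
  - apply qm_f_formula_type.
  - split; [apply Sub_dn | apply sat_dn, Hphi].
  - intros C a [Hin Hs]. split; [apply (con_conc _ _ a Hin) | exact Hs].
  - intros r a b [_ Hs] C [Hc Hsc]. split.
    + apply con_neg, (con_ex _ r), (con_neg _ _ Hc).
    + apply cint_cneg. intros HC. apply Hsc. exists (iI I b). auto.
  - intros c r D [x Hx] HD. apply Hx in HD as [HcD [y [Hr Hy]]].
    exists (fun C => con phi C /\ cint I C y). split; [apply qm_T_elem|].
    split; [split; [apply (con_ex _ r) | ]; auto|].
    intros E HE. apply Hx in HE as [HcE HsE]. split.
    + apply con_neg, (con_ex _ r), (con_neg _ _ HcE).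
    + apply cint_cneg. intros HyE. apply HsE. exists y. auto.
  - intros c C [x Hx] Hc [_ Hs]. apply Hx in Hc as [_ Hc].
    apply cint_cneg in Hc. apply Hc, Hs.
  - intros C [_ Hs]. apply not_all_ex_not in Hs as [x Hx].
    exists (fun D => con phi D /\ cint I D x). split; [apply qm_T_elem | tauto].
  - destruct (dom_inh I) as [x]. eexists. apply (qm_T_elem _ _ x).
Qed.

Lemma ftypes_qm_list phi I : sat I phi -> ftypes phi (fun psi => In psi (qm_list phi I)).
Proof.
  intros Hphi. replace (fun psi => In psi (qm_list phi I)) with (qm_f phi I).
  - exists (qm_T phi I), (qm_o phi I). apply qm_quasimodel, Hphi.
  - apply functional_extensionality. intros psi.
    apply propositional_extensionality. symmetry. apply In_qm_list.
Qed.

Lemma Ccontr_char phi M I :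
  sat I (Ccontr phi M) <-> sat I phi /\ (sat M phi -> ~ equiv_phi phi I M).
Proof.
  unfold Ccontr. destruct (decide (sat M phi)) eqn:HM.
  - rewrite decide_spec in HM. rewrite sat_bigOr. split.
    + intros [p [Hp HI]]. apply in_map_iff in Hp as [s [<- Hs]].
      apply filter_In in Hs as [_ Hs]. rewrite decide_spec in Hs.
      unfold in_qfilter, ftypes in Hs.
      destruct Hs as [[T [o [[_ [_ [Hft [Hdn _]]]] _]]] HsM].
      pose proof (sat_lit_conj_formula_type _ _ _ Hft HI) as HsI.
      split; [apply sat_dn, (HsI (dn phi)), Hdn|].
      intros _ HIM. apply HsM. intros psi.
      rewrite HsI. apply equiv_phi_qm_f, HIM.
    + intros [HI HIM]. specialize (HIM HM).
      exists (lit_conj (qm_list phi I)). split; [|apply sat_lit_conj_qm_list].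
      apply in_map, filter_In. split; [apply qm_list_sublist|].
      apply decide_spec. split; [apply ftypes_qm_list, HI|].
      intros HqM. apply HIM, equiv_phi_qm_f. intros psi.
      rewrite <- HqM, In_qm_list. reflexivity.
  - assert (~ sat M phi) by (intros H; rewrite <- decide_spec in H; congruence).
    tauto.
Qed.

Lemma postulates_of_fequiv_Ccontr (C' : formula -> Interp -> formula) :
  (forall phi M, fequiv (C' phi M) (Ccontr phi M)) ->
  forall phi M,
    P_success C' phi M /\ P_inclusion C' phi M /\
    P_atomic_retainment C' phi M /\ P_atomic_extensionality C' phi M.
Proof.
  intros HC phi M. unfold P_success, P_inclusion, P_atomic_retainment,
    P_atomic_extensionality, Mod.
  split; [|split; [|split]].
  - rewrite (HC phi M M), Ccontr_char. pose proof (equiv_phi_refl phi M). tauto.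
  - intros I. rewrite (HC phi M I), Ccontr_char. tauto.
  - intros MM [Hsub Hne] Hin _. apply Hne. intros I. split; [apply Hsub|].
    intros HI. apply HC, Ccontr_char. destruct (Hin I HI). tauto.
  - intros M' HM' I. rewrite (HC phi M I), (HC phi M' I), !Ccontr_char.
    rewrite (equiv_phi_sat _ _ _ HM').
    assert (equiv_phi phi I M <-> equiv_phi phi I M').
    { split; intros HI; [apply (equiv_phi_trans _ _ _ _ HI), equiv_phi_sym
                        | apply (equiv_phi_trans _ _ _ _ HI)]; exact HM'. }
    tauto.
Qed.

Section Postulates.

Variable C' : formula -> Interp -> formula.
Hypothesis postulates : forall phi M,
  P_success C' phi M /\ P_inclusion C' phi M /\
  P_atomic_retainment C' phi M /\ P_atomic_extensionality C' phi M.

(* If [J ≡_φ M], extensionality would make [J] a model of [C'(φ, J)], against success. *)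
Lemma postulates_sat_Ccontr phi M J : sat J (C' phi M) -> sat J (Ccontr phi M).
Proof.
  intros HJ. destruct (postulates phi M) as [_ [Hincl [_ Hext]]].
  apply Ccontr_char. split; [apply Hincl, HJ|].
  intros _ HJM. apply (postulates phi J), (Hext J HJM J), HJ.
Qed.

(* [Mod(C(φ, M))] is finitely representable and lies in [Mod(φ) \ [M]_φ], so
   retainment forbids it to exceed [Mod(C'(φ, M))]. *)
Lemma fequiv_Ccontr_of_postulates phi M : fequiv (C' phi M) (Ccontr phi M).
Proof.
  intros I. split; [apply postulates_sat_Ccontr|].
  intros HI. apply NNPP. intros HnI.
  destruct (postulates phi M) as [_ [_ [Hret _]]].
  apply (Hret (Mod (Ccontr phi M))).
  - split; [intros J; apply postulates_sat_Ccontr|].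
    intros Hall. apply HnI, Hall, HI.
  - intros J HJ. apply Ccontr_char in HJ as [HJphi HJM]. split; [exact HJphi|].
    intros HJM'. apply HJM; [|exact HJM'].
    apply (equiv_phi_sat _ _ _ HJM'), HJphi.
  - exists (Ccontr phi M). reflexivity.
Qed.

End Postulates.

Theorem mainTheorem1 (C' : formula -> Interp -> formula) :
  (forall (phi : formula) (M : Interp), fequiv (C' phi M) (Ccontr phi M)) <->
  (forall (phi : formula) (M : Interp),
     P_success C' phi M /\ P_inclusion C' phi M /\
     P_atomic_retainment C' phi M /\ P_atomic_extensionality C' phi M).
Proof.
  split.
  - apply postulates_of_fequiv_Ccontr.
  - apply fequiv_Ccontr_of_postulates.
Qed.
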